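(* For all integers $\ell,k\ge0$, in $U(gl(m|n+1))$, $$\sum_{p=1}^{N}(-1)^{(p)}\big[(\mathcal B^\ell)^p_{\ N},(\mathcal B^k)^N_{\ p}\big]=\sum_{i=0}^{\ell-1}\big(\hat I_i\,\tau_{\ell+k-1-i}-\hat I_{\ell+k-1-i}\,\tau_i\big).$$
   Context: Over $\mathbb{C}$, $N=m+n+1$, parity $(p)=0$ for $1\le p\le m$, $(p)=1$ for $m<p\le N$. $gl(m|n+1)$ has homogeneous basis $E_{pq}$ of parity $(p)+(q)$ with graded bracket $[E_{pq},E_{rs}]=\delta_{qr}E_{ps}-(-1)^{((p)+(q))((r)+(s))}\delta_{ps}E_{rq}$. $\mathcal B^p_{\ q}=(-1)^{(p)}E_{pq}$, with powers $(\mathcal B^k)^p_{\ q}=\sum_r\mathcal B^p_{\ r}(\mathcal B^{k-1})^r_{\ q}$, $(\mathcal B^0)^p_{\ q}=\delta_{pq}$; the entry $(\mathcal B^k)^p_{\ q}$ ($k\ge1$) is homogeneous of parity $(p)+(q)$. $\tau_k=(\mathcal B^k)^N_{\ N}$ (so $\tau_0=1$) and $\hat I_k=\sum_{p=1}^N(-1)^{(p)}(\mathcal B^k)^p_{\ p}$ (so $\hat I_0=m-n-1$), the Casimir elements of $gl(m|n+1)$. The bracket on the left is the graded commutator $[a,b]=ab-(-1)^{|a||b|}ba$ for homogeneous $a,b$. *)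

From HB Require Import structures.
From mathcomp Require Import all_boot all_order all_algebra.
Set Implicit Arguments. Unset Strict Implicit. Unset Printing Implicit Defensive.
Import GRing.Theory.
Local Open Scope ring_scope.

(* Indices p = 1..N of the paper are the ordinals 'I_N with N = m+n+1,
   shifted by one: ordinal i corresponds to p = i+1.  The special index N
   is ord_max. *)
Notation Nidx m n := (m + n).+1 (only parsing).

(* parity (p): even (false) for the first m indices, odd (true) otherwise *)
Definition par (m N : nat) (p : 'I_N) : bool := (m <= p)%N.

Definition sgn (A : ringType) (b : bool) : A := (-1) ^+ b.

Definition sbr (A : ringType) (pa pb : bool) (a b : A) : A :=
  a * b - sgn A (pa && pb) * (b * a).

Definition gl_super_rel (A : ringType) (m n : nat)
    (E : 'I_(Nidx m n) -> 'I_(Nidx m n) -> A) : Prop :=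
  forall p q r s : 'I_(Nidx m n),
    sbr (par m p (+) par m q) (par m r (+) par m s) (E p q) (E r s)
    = (q == r)%:R * E p s
      - sgn A ((par m p (+) par m q) && (par m r (+) par m s))
        * ((p == s)%:R * E r q).

Definition Bmx (A : ringType) (m N : nat) (E : 'I_N -> 'I_N -> A) : 'M[A]_N :=
  \matrix_(p, q) (sgn A (par m p) * E p q).

Fixpoint Bpow (A : ringType) (m N : nat) (E : 'I_N -> 'I_N -> A) (k : nat)
  : 'M[A]_N :=
  match k with
  | 0 => 1%:M
  | k'.+1 => Bmx m E *m Bpow m E k'
  end.

Definition tau (A : ringType) (m n : nat)
    (E : 'I_(Nidx m n) -> 'I_(Nidx m n) -> A) (k : nat) : A :=
  Bpow m E k ord_max ord_max.

Definition Ihat (A : ringType) (m N : nat) (E : 'I_N -> 'I_N -> A) (k : nat) : A :=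
  \sum_(p < N) sgn A (par m p) * Bpow m E k p p.

From HB Require Import structures.
From mathcomp Require Import all_boot all_order all_algebra.
Import GRing.Theory.
Local Open Scope ring_scope.

(* Every power of B obeys, against a generator B^p_q, the same graded commutation
   relation as B itself (induction on the exponent).  Hence the supertraces Ihat_k
   are central, and moving one factor B through
     S(a, c) = sum_p (-1)^(p) (B^a)^p_N (B^c)^N_p
   gives S(a+1, c) = S(a, c+1) + Ihat_a tau_c - tau_a Ihat_c.  The left-hand side
   is S(l, k) + tau_(l+k), and telescoping down to S(0, c) = - tau_c yields the
   right-hand side. *)

Section SuperCommutator.
Variable A : ringType.

Lemma sgn_intr b : sgn A b = ((-1) ^+ b : int)%:~R.
Proof. by case: b; rewrite /sgn ?rmorphN ?rmorph1. Qed.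

Lemma sgn_false : sgn A false = 1.
Proof. exact: expr0. Qed.

Lemma sgn_true : sgn A true = -1.
Proof. exact: expr1. Qed.

Lemma sgn_addb x y : sgn A (x (+) y) = sgn A x * sgn A y.
Proof. exact: signr_addb. Qed.

Lemma sgn_comm x (a : A) : a * sgn A x = sgn A x * a.
Proof. exact: commr_sign. Qed.

Lemma mulr_sbr x y (a c : A) : a * c = sgn A (x && y) * (c * a) + sbr x y a c.
Proof. by rewrite /sbr addrC subrK. Qed.

Lemma sbr_sumr x y (a : A) I (r : seq I) (P : pred I) (c : I -> A) :
  sbr x y a (\sum_(i <- r | P i) c i) = \sum_(i <- r | P i) sbr x y a (c i).
Proof. by rewrite /sbr mulr_sumr mulr_suml mulr_sumr -sumrB. Qed.

Lemma sbr_mulr x y z (a c d : A) :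
  sbr x (y (+) z) a (c * d) = sbr x y a c * d + sgn A (x && y) * (c * sbr x z a d).
Proof.
rewrite /sbr; have -> : x && (y (+) z) = (x && y) (+) (x && z) by case: x.
rewrite mulrBl !mulrBr (mulrA c (sgn A _)) (sgn_comm _ c) sgn_addb !mulrA.
by rewrite addrA subrK.
Qed.

Lemma sumr_delta (I : finType) (j : I) (F : I -> A) :
  \sum_i (i == j)%:R * F i = F j.
Proof.
by rewrite (bigD1 j) //= eqxx mul1r big1 ?addr0 // => i /negbTE ->; rewrite mul0r.
Qed.

End SuperCommutator.

Section MatrixPowers.
Variables (A : ringType) (m N : nat) (E : 'I_N -> 'I_N -> A).
Local Notation b := (Bmx m E).
Local Notation X := (Bpow m E).

Lemma BmxE p q : b p q = sgn A (par m p) * E p q.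
Proof. by rewrite mxE. Qed.

Lemma Bpow0E r s : X 0 r s = (r == s)%:R.
Proof. by rewrite mxE. Qed.

Lemma BpowSE k r s : X k.+1 r s = \sum_t b r t * X k t s.
Proof. by rewrite mxE. Qed.

Lemma BpowD k l : X (k + l) = X k *m X l.
Proof. by elim: k => [|k IHk] /=; rewrite ?mul1mx // IHk mulmxA. Qed.

Lemma BpowSrE k r s : X k.+1 r s = \sum_t X k r t * b t s.
Proof. by rewrite -addn1 BpowD mxE /= mulmx1. Qed.

End MatrixPowers.

Lemma par_max m n : par m (@ord_max (m + n)) = true.
Proof. exact: leq_addr. Qed.

Ltac split_deltas :=
  rewrite ?eqxx;
  repeat match goal with
    | |- context [?i == ?j] => match type of i with ordinal _ =>
        case: (eqVneq i j) => [?|?]; [subst|]; rewrite ?eqxx end end.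

Ltac abstract_entries :=
  repeat match goal with
  | |- context [@fun_of_matrix ?R ?k ?l ?B ?i ?j] =>
      let x := fresh "x" in set x := @fun_of_matrix R k l B i j; clearbody x
  end.

(* Closes an equation between two monomials in central signs, Kronecker deltas
   and noncommuting entries: the deltas are eliminated by case analysis, the
   entries are frozen, every sign becomes an integer scalar [*~ z], and the two
   resulting integer coefficients are compared by case analysis on the parities. *)
Ltac sign_ring :=
  split_deltas; abstract_entries;
  rewrite ?(mulr1n, mulr0n) ?(mul0r, mulr0, mul1r, mulr1, oppr0) ?par_max;
  lazymatch goal with |- @eq ?R _ _ =>
    rewrite -[LHS]mulr1z -[RHS]mulr1z ?sgn_intr -?(@mulrN1z R) end;
  rewrite ?(mulrzl, mulrzr) ?(mulrzAl, mulrzAr) -?mulrzA ?mulrA;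
  congr (_ *~ _); rewrite ?(mul1r, mulr1);
  by repeat lazymatch goal with |- context [par ?m ?x] => case: (par m x) end.

Section GradedRelations.
Variables (A : ringType) (m n : nat).
Local Notation N := (m + n).+1.
Variable E : 'I_N -> 'I_N -> A.
Hypothesis hE : gl_super_rel E.
Local Notation pi := (par m).
Local Notation pp p q := (pi p (+) pi q).
Local Notation e := (sgn A).
Local Notation b := (Bmx m E).
Local Notation X := (Bpow m E).
Local Notation M := (@ord_max (m + n)).

Lemma sbr_Bmx p q r s :
  sbr (pp p q) (pp r s) (b p q) (b r s)
  = (q == r)%:R * e (pi q) * b p s
    - (p == s)%:R * e (pp p q && pp r s) * e (pi p) * b r q.
Proof.
transitivity (e (pi p) * e (pi r) * sbr (pp p q) (pp r s) (E p q) (E r s)).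
  by rewrite /sbr !BmxE mulrBr; congr (_ - _); sign_ring.
by rewrite (hE p q r s) !BmxE mulrBr; congr (_ - _); sign_ring.
Qed.

Lemma sbr_Bmx_Bpow k p q r s :
  sbr (pp p q) (pp r s) (b p q) (X k r s)
  = (q == r)%:R * e (pi q) * X k p s
    - (p == s)%:R * e (pp p q && pp r s) * e (pi p) * X k r q.
Proof.
elim: k r s => [|k IHk] r s.
  (* Both sides vanish; for q = r, p = s this is (-1)^((r)+(s)) (-1)^(s) = (-1)^(r). *)
  rewrite /sbr !Bpow0E; split_deltas;
    rewrite ?(mulr1n, mulr0n, mul0r, mulr0, mul1r, mulr1) ?addbb ?andbF ?sgn_false ?mul1r ?subrr //.
  by rewrite addbC andbb -sgn_addb addbK subrr.
have expand t :
    sbr (pp p q) (pp r t (+) pp t s) (b p q) (b r t * X k t s)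
    = (q == r)%:R * e (pi q) * (b p t * X k t s)
      - (t == p)%:R * (e (pp p q && pp r p) * e (pi p) * (b r q * X k p s))
      + (t == q)%:R * (e (pp p q && pp r q) * e (pi q) * (b r q * X k p s))
      - (p == s)%:R * e (pp p q && pp r s) * e (pi p) * (b r t * X k t q).
  rewrite sbr_mulr sbr_Bmx IHk mulrBl !mulrBr addrA.
  by congr (_ - _ + _ - _); sign_ring.
(* the two middle terms of [expand] cancel after summation over t *)
have sgn_swap : e (pp p q && pp r p) * e (pi p) = e (pp p q && pp r q) * e (pi q).
  by rewrite -!sgn_addb; case: (pi p); case: (pi q); case: (pi r).
rewrite BpowSE sbr_sumr.
have parity_via (t : 'I_N) : pp r s = pp r t (+) pp t s by rewrite addbA addbK.
under eq_bigr => t _ do rewrite (parity_via t) expand.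
rewrite sumrB big_split sumrB /= !sumr_delta sgn_swap subrK.
by rewrite -!mulr_sumr -!BpowSE.
Qed.

Lemma mulr_Bmx_Bpow k p q r s :
  b p q * X k r s
  = e (pp p q && pp r s) * (X k r s * b p q)
    + ((q == r)%:R * e (pi q) * X k p s
       - (p == s)%:R * e (pp p q && pp r s) * e (pi p) * X k r q).
Proof. by rewrite (mulr_sbr _ (pp p q) (pp r s)) sbr_Bmx_Bpow. Qed.

Lemma Bmx_Ihat_comm k p q : b p q * Ihat m E k = Ihat m E k * b p q.
Proof.
have expand r : b p q * (e (pi r) * X k r r)
    = e (pi r) * X k r r * b p q + (r == q)%:R * X k p r - (r == p)%:R * X k r q.
  rewrite mulrA sgn_comm -mulrA mulr_Bmx_Bpow mulrDr mulrBr !addrA.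
  by congr (_ + _ + _); sign_ring.
rewrite /Ihat mulr_sumr mulr_suml (eq_bigr _ (fun r _ => expand r)).
by rewrite sumrB big_split /= !sumr_delta addrK.
Qed.

Lemma Bpow_Ihat_comm a k r s : X a r s * Ihat m E k = Ihat m E k * X a r s.
Proof.
elim: a r s => [|a IHa] r s; first by rewrite Bpow0E commr_nat.
rewrite BpowSE mulr_suml mulr_sumr; apply: eq_bigr => t _.
by rewrite -mulrA IHa mulrA Bmx_Ihat_comm -mulrA.
Qed.

Definition str_col_row a c : A := \sum_(p < N) e (pi p) * (X a p M * X c M p).

Lemma str_col_row0 c : str_col_row 0 c = - tau E c.
Proof.
rewrite /str_col_row; under eq_bigr => p _ do rewrite Bpow0E mulrA commr_nat -mulrA.
by rewrite sumr_delta par_max sgn_true mulN1r.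
Qed.

Lemma str_col_rowS a c :
  str_col_row a.+1 c = str_col_row a c.+1 + Ihat m E a * tau E c - tau E a * Ihat m E c.
Proof.
have expand p t : e (pi p) * (b p t * X a t M * X c M p)
    = e (pi t) * (X a t M * (X c M p * b p t))
      - (t == M)%:R * (e (pi p) * (X a M M * X c p p))
      - e (pp p t) * (X a t M * X c M t)
      + e (pi p) * e (pi t) * (X a p M * X c M p)
      + (p == M)%:R * (e (pi t) * (X a t t * X c M M)).
  rewrite mulr_Bmx_Bpow mulrDl -!mulrA mulr_Bmx_Bpow.
  rewrite !(mulrDr, mulrBr, mulrDl, mulrBl) !addrA.
  by congr (_ + _ + _ + _ + _); sign_ring.
have next_power : \sum_(p < N) \sum_(t < N) e (pi t) * (X a t M * (X c M p * b p t))
    = str_col_row a c.+1.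
  by rewrite exchange_big; apply: eq_bigr => t _; rewrite -!mulr_sumr -BpowSrE.
have tau_Ihat : \sum_(p < N) \sum_(t < N) - ((t == M)%:R * (e (pi p) * (X a M M * X c p p)))
    = - (tau E a * Ihat m E c).
  rewrite /tau /Ihat mulr_sumr -sumrN; apply: eq_bigr => p _.
  by rewrite sumrN sumr_delta !mulrA sgn_comm.
have cross : \sum_(p < N) \sum_(t < N) - (e (pp p t) * (X a t M * X c M t))
    = - \sum_(p < N) \sum_(t < N) e (pi p) * e (pi t) * (X a p M * X c M p).
  rewrite exchange_big -sumrN; apply: eq_bigr => p _.
  by rewrite -sumrN; apply: eq_bigr => t _; rewrite sgn_addb sgn_comm.
have Ihat_tau : \sum_(p < N) \sum_(t < N) (p == M)%:R * (e (pi t) * (X a t t * X c M M))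
    = Ihat m E a * tau E c.
  rewrite exchange_big /Ihat /tau mulr_suml; apply: eq_bigr => t _.
  by rewrite sumr_delta mulrA.
rewrite {1}/str_col_row.
under eq_bigr => p _ do
  rewrite BpowSE mulr_suml mulr_sumr (eq_bigr _ (fun t _ => expand p t)) !big_split /=.
rewrite !big_split /= next_power tau_Ihat cross Ihat_tau.
by rewrite subrK addrAC.
Qed.

Lemma sum_sbr_col_row l k :
  \sum_(p < N) e (pi p) * sbr (pp p M) (pp M p) (X l p M) (X k M p)
  = str_col_row l k + tau E (l + k).
Proof.
rewrite /sbr; under eq_bigr do rewrite mulrBr.
rewrite big_split /str_col_row /tau (addnC l k) BpowD mxE.
by congr (_ + _); apply: eq_bigr => p _; sign_ring.
Qed.

Lemma str_col_row_add_tau l k :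
  str_col_row l k + tau E (l + k)
  = \sum_(i < l) (Ihat m E i * tau E (l + k - 1 - i) - Ihat m E (l + k - 1 - i) * tau E i).
Proof.
elim: l k => [|l IHl] k; first by rewrite big_ord0 str_col_row0 addNr.
rewrite str_col_rowS addSnnS big_ord_recr -IHl /= addnS subn1 addKn.
by rewrite /tau Bpow_Ihat_comm -(addrA (str_col_row _ _)) addrAC.
Qed.

End GradedRelations.

Theorem proposition12 (A : ringType) (m n : nat)
    (E : 'I_(m + n).+1 -> 'I_(m + n).+1 -> A)
    (hE : gl_super_rel E) (l k : nat) :
  \sum_(p < (m + n).+1)
     sgn A (par m p) *
     sbr (par m p (+) par m (@ord_max (m + n))) (par m (@ord_max (m + n)) (+) par m p)
         (Bpow m E l p ord_max) (Bpow m E k ord_max p)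
  = \sum_(i < l)
      (Ihat m E i * tau E (l + k - 1 - i) - Ihat m E (l + k - 1 - i) * tau E i).
Proof. by rewrite sum_sbr_col_row str_col_row_add_tau. Qed.
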